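(* Let $R$ be a commutative ring with identity, $n>1$, $S=M_n(R)$. If $A\in S$ and $c\in R$ is a nonzero element with $c\det A=0$, then there exists a nonzero matrix $C\in cS=\{cX: X\in S\}$ with $AC=CA=0$. *)

From mathcomp Require Import all_boot all_algebra.
Set Implicit Arguments. Unset Strict Implicit. Unset Printing Implicit Defensive.

From mathcomp Require Import all_boot all_algebra.
From Stdlib Require Import Classical.
Set Implicit Arguments. Unset Strict Implicit. Unset Printing Implicit Defensive.
Import GRing.Theory.
Local Open Scope ring_scope.

(** McCoy's argument.  Let k be the largest size such that c does not kill
  every k x k minor of A; k < n because c kills det A.  Choose a k x k minor
  with c * minor <> 0 and border it by one more row and column to a
  (k+1) x (k+1) submatrix B.  By Laplace expansion, every entry of
  (columns of A) * adj B and of adj B * (rows of A) is a (k+1) x (k+1) minor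
  of A, hence killed by c; so c times adj B, placed back in an n x n matrix,
  is annihilated by A on both sides.  Its entry at the new corner is
  c * minor <> 0. *)

Lemma exists_threshold (P : nat -> Prop) (n : nat) :
  ~ P 0 -> P n -> exists2 k, (k < n)%N & ~ P k /\ P k.+1.
Proof.
move=> nP0; elim: n => [/nP0 //|n IHn Pn1].
have [Pn | nPn] := classic (P n).
  by have [k kn Pk] := IHn Pn; exists k => //; apply: ltnW.
by exists n.
Qed.

Lemma exists_notin_codom (T : finType) (k : nat) (h : 'I_k -> T) :
  (k < #|T|)%N -> exists x, x \notin codom h.
Proof.
move=> kT; apply: NNPP => all_in; suff : (#|T| <= k)%N by rewrite leqNgt kT.
rewrite -[leqRHS]card_ord -(size_codom h); apply: leq_trans (card_size _).
apply/subset_leq_card/subsetP => x _.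
by apply: contra_notT all_in => x_out; exists x.
Qed.

Section ExtendOrd.

Variables (T : eqType) (k : nat) (h : 'I_k -> T) (x : T).

Definition extend_ord (w : 'I_k.+1) : T :=
  if unlift ord_max w is Some v then h v else x.

Lemma extend_ord_lift i : extend_ord (lift ord_max i) = h i.
Proof. by rewrite /extend_ord liftK. Qed.

Lemma extend_ord_max : extend_ord ord_max = x.
Proof. by rewrite /extend_ord unlift_none. Qed.

Lemma extend_ord_inj : injective h -> x \notin codom h -> injective extend_ord.
Proof.
move=> h_inj x_out u v.
case: (unliftP ord_max u) => [u'|] ->; case: (unliftP ord_max v) => [v'|] ->;
  rewrite ?extend_ord_lift ?extend_ord_max // => huv.
- by rewrite (h_inj _ _ huv).
- by move: x_out; rewrite -huv codom_f.
- by move: x_out; rewrite huv codom_f.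
Qed.

End ExtendOrd.

Section SelectionMatrices.

Variable R : comNzRingType.

Lemma mxsub1_inj n k (f : 'I_k -> 'I_n) :
  injective f -> mxsub f f 1%:M = 1%:M :> 'M[R]_k.
Proof. by move=> f_inj; apply/matrixP => i j; rewrite !mxE (inj_eq f_inj). Qed.

Lemma mxsub_colsub1_mul_rowsub1 m n k (q : 'I_k -> 'I_n) (p : 'I_k -> 'I_m)
    (M : 'M[R]_k) :
  injective q -> injective p ->
  mxsub q p (colsub q 1%:M *m M *m rowsub p 1%:M) = M.
Proof.
move=> q_inj p_inj; rewrite mxsub_mul -mul_rowsub_mx -mxsubrc -mxsubcr.
by rewrite !mxsub1_inj // mul1mx mulmx1.
Qed.

End SelectionMatrices.

Section Minors.

Variables (R : comNzRingType) (m n : nat) (A : 'M[R]_(m, n)) (c : R).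

Definition annihilates_minors (k : nat) :=
  forall (f : 'I_k -> 'I_m) (g : 'I_k -> 'I_n), c * \det (mxsub f g A) = 0.

Lemma det_mxsub_neq0_injl k (f : 'I_k -> 'I_m) (g : 'I_k -> 'I_n) :
  \det (mxsub f g A) != 0 -> injective f.
Proof.
move=> det_neq0 i j fij; apply: contraNeq det_neq0 => ij.
by apply/eqP/(determinant_alternate ij) => l; rewrite !mxE fij.
Qed.

Lemma det_mxsub_neq0_injr k (f : 'I_k -> 'I_m) (g : 'I_k -> 'I_n) :
  \det (mxsub f g A) != 0 -> injective g.
Proof.
move=> det_neq0 i j gij; apply: contraNeq det_neq0 => ij.
by rewrite -det_tr; apply/eqP/(determinant_alternate ij) => l; rewrite !mxE gij.
Qed.

Lemma adj_mxsub_extend_ord k (f : 'I_k -> 'I_m) (g : 'I_k -> 'I_n) i0 j0 :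
  \adj (mxsub (extend_ord f i0) (extend_ord g j0) A) ord_max ord_max
    = \det (mxsub f g A).
Proof.
rewrite mxE /cofactor -signr_odd addnn odd_double expr0 mul1r.
by congr (\det _); apply/matrixP => i j; rewrite !mxE !extend_ord_lift.
Qed.

Section AdjugateOfMinor.

Variables (k : nat) (p : 'I_k -> 'I_m) (q : 'I_k -> 'I_n).
Hypothesis c_minors : annihilates_minors k.

(* Entry (r, u) of the product is the Laplace expansion along row u of the
   minor in which row p u is replaced by row r. *)
Lemma colsub_mul_adj_annihilated : c *: (colsub q A *m \adj (mxsub p q A)) = 0.
Proof.
apply/matrixP => r u; rewrite !mxE.
pose p' w := if w == u then r else p w.
rewrite -[RHS](c_minors p' q) (expand_det_row _ u); congr (_ * _).
apply: eq_bigr => v _; rewrite !mxE /p' eqxx; congr (_ * (_ * \det _)).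
by apply/matrixP => i j; rewrite !mxE eq_sym (negbTE (neq_lift u i)).
Qed.

Lemma adj_mul_rowsub_annihilated : c *: (\adj (mxsub p q A) *m rowsub p A) = 0.
Proof.
apply/matrixP => r u; rewrite !mxE.
pose q' w := if w == r then u else q w.
rewrite -[RHS](c_minors p q') (expand_det_col _ r); congr (_ * _).
apply: eq_bigr => v _; rewrite !mxE /q' eqxx mulrC; congr (_ * (_ * \det _)).
by apply/matrixP => i j; rewrite !mxE eq_sym (negbTE (neq_lift r j)).
Qed.

End AdjugateOfMinor.

Lemma annihilator_of_minors k :
  (k < m)%N -> (k < n)%N -> ~ annihilates_minors k -> annihilates_minors k.+1 ->
  exists2 C : 'M[R]_(n, m), C != 0 &
    (exists X : 'M[R]_(n, m), C = c *: X) /\ A *m C = 0 /\ C *m A = 0.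
Proof.
move=> km kn not_minors minors.
have [f /not_all_ex_not [g /eqP c_det_neq0]] := not_all_ex_not _ _ not_minors.
have det_neq0 : \det (mxsub f g A) != 0.
  by apply: contraNneq c_det_neq0 => ->; rewrite mulr0.
have [i0 i0_out] : exists i0, i0 \notin codom f.
  by apply: exists_notin_codom; rewrite card_ord.
have [j0 j0_out] : exists j0, j0 \notin codom g.
  by apply: exists_notin_codom; rewrite card_ord.
pose p := extend_ord f i0; pose q := extend_ord g j0.
have p_inj : injective p by apply: extend_ord_inj (det_mxsub_neq0_injl det_neq0) _.
have q_inj : injective q by apply: extend_ord_inj (det_mxsub_neq0_injr det_neq0) _.
pose X := colsub q 1%:M *m \adj (mxsub p q A) *m rowsub p 1%:M.
have X_corner : X (q ord_max) (p ord_max) = \det (mxsub f g A).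
  rewrite -(adj_mxsub_extend_ord _ _ i0 j0).
  by rewrite -[\adj _](mxsub_colsub1_mul_rowsub1 _ q_inj p_inj) [RHS]mxE.
exists (c *: X).
  apply: contra_neq c_det_neq0 => /matrixP /(_ (q ord_max) (p ord_max)).
  by rewrite [in X in X = _ -> _]mxE X_corner [in X in _ = X -> _]mxE.
split; first by exists X.
split.
- rewrite /X -scalemxAr !mulmxA mulmx_colsub mulmx1.
  by rewrite scalemxAl colsub_mul_adj_annihilated ?mul0mx.
- rewrite /X -scalemxAl -!mulmxA -rowsubE scalemxAr.
  by rewrite adj_mul_rowsub_annihilated ?mulmx0.
Qed.

End Minors.

Lemma annihilates_minors0 (R : comNzRingType) m n (A : 'M[R]_(m, n)) c :
  c != 0 -> ~ annihilates_minors A c 0.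
Proof.
have f0 (T : Type) : 'I_0 -> T by case.
by move=> c_neq0 /(_ (f0 _) (f0 _)); rewrite det_mx00 mulr1; apply/eqP.
Qed.

Lemma annihilates_minors_det (R : comNzRingType) n (A : 'M[R]_n) c :
  c * \det A = 0 -> annihilates_minors A c n.
Proof.
move=> c_det f g; rewrite mxsubrc rowsubE -[A in colsub _ A]mulmx1 -mulmx_colsub.
by rewrite !det_mulmx !mulrA (mulrC c) -(mulrA _ c) c_det mulr0 mul0r.
Qed.

Theorem corollary1 (R : comNzRingType) (n : nat) (hn : (1 < n)%N)
  (A : 'M[R]_n) (c : R) (hc : c != 0) (hdet : c * \det A = 0) :
  exists2 C : 'M[R]_n, C != 0 &
    (exists X : 'M[R]_n, C = c *: X) /\ A *m C = 0 /\ C *m A = 0.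
Proof.
have [k kn [not_minors minors]] :=
  exists_threshold (annihilates_minors0 (A := A) hc) (annihilates_minors_det hdet).
exact: (annihilator_of_minors kn kn not_minors minors).
Qed.
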